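(* Let $n\ge2$ and let $F_n$ have free basis $x_1,\dots,x_n$. There exists a nontrivial cyclically reduced word $\alpha_1\in F_n$ such that the endomorphism $\phi\in\mathrm{End}(F_n)$ defined by $\phi(x_1)=\alpha_1^{-1}x_1\alpha_1$ and $\phi(x_i)=x_i$ for $i\ne1$ is not surjective. (For instance $\alpha_1=x_nx_{n-1}\cdots x_2x_1x_n^{-2}x_{n-1}^{-2}\cdots x_2^{-2}x_1^{-2}$ as chosen in the paper.)
   Context: A word is cyclically reduced if it is reduced and its first letter is not the inverse of its last letter. Together with the preceding result that such conjugating endomorphisms induce surjections on all quotients $F_n/F_n^{(k)}$ of the lower central series ($F_n^{(1)}=F_n$, $F_n^{(k+1)}=[F_n^{(k)},F_n]$), this shows surjectivity on all these nilpotent quotients does not imply surjectivity on $F_n$. *)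

(* The free group F_n on x_1..x_n, modelled by freely
   reduced words over the letters x_i^{+1}, x_i^{-1}. *)
From mathcomp Require Import all_boot.
Set Implicit Arguments. Unset Strict Implicit. Unset Printing Implicit Defensive.

(* A letter (i, false) is x_{i+1}, (i, true) is x_{i+1}^{-1}. *)
Definition letter (n : nat) : Type := ('I_n * bool)%type.

Definition linv n (a : letter n) : letter n := (a.1, ~~ a.2).

Definition word n := seq (letter n).

Definition reduced n (w : word n) : bool :=
  if w is a :: t then path (fun a b => b != linv a) a t else true.

Definition cyc_reduced n (w : word n) : bool :=
  reduced w && (if w is a :: t then last a t != linv a else true).

Definition push n (a : letter n) (s : word n) : word n :=
  if s is b :: t then (if b == linv a then t else a :: s) else [:: a].
Definition red n (w : word n) : word n := foldr (@push n) [::] w.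

Definition wmul n (u v : word n) : word n := red (u ++ v).
Definition winv n (w : word n) : word n := rev (map (@linv n) w).
Definition gen n (i : 'I_n) : word n := [:: (i, false)].

Definition endo n (f : 'I_n -> word n) (w : word n) : word n :=
  red (flatten [seq if a.2 then winv (f a.1) else f a.1 | a <- w]).

(* phi(x_1) = alpha^{-1} x_1 alpha, phi(x_i) = x_i for i <> 1
   (x_1 is the generator of index 0). *)
Definition conj_x1 n (alpha : word n) (i : 'I_n) : word n :=
  if val i == 0 then wmul (wmul (winv alpha) (gen i)) alpha else gen i.

Definition endo_surjective n (f : 'I_n -> word n) : Prop :=
  forall v : word n, reduced v -> exists w : word n, reduced w /\ endo f w = v.

(* Evaluating words in a group gives a homomorphism from F_n, so an
   endomorphism phi is not surjective as soon as some evaluation sends every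
   phi(x_i) into a subgroup H that misses the image of some generator.
   For alpha = x_1 x_2 x_1 evaluate in Sym(3) with x_1 |-> s = (0 1),
   x_2 |-> t = (0 2) and x_i |-> 1 otherwise: phi(x_1) |-> s^(s t s) = t, so
   all phi(x_i) land in the centraliser of t, whereas s does not commute
   with t. *)
From mathcomp Require Import all_boot all_fingroup.
Set Implicit Arguments. Unset Strict Implicit. Unset Printing Implicit Defensive.

Local Open Scope group_scope.

Section WordEvaluation.

Variables (gT : finGroupType) (n : nat).

Definition leval (g : 'I_n -> gT) (a : letter n) : gT :=
  if a.2 then (g a.1)^-1 else g a.1.

Fixpoint weval (g : 'I_n -> gT) (w : word n) : gT :=
  if w is a :: t then leval g a * weval g t else 1.

Variable g : 'I_n -> gT.

Lemma weval_cat u v : weval g (u ++ v) = weval g u * weval g v.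
Proof. by elim: u => [|a u IH] /=; rewrite ?mul1g // IH mulgA. Qed.

Lemma leval_linv a : leval g (linv a) = (leval g a)^-1.
Proof. by case: a => i [] /=; rewrite /leval /= ?invgK. Qed.

Lemma weval_push a s : weval g (push a s) = leval g a * weval g s.
Proof.
case: s => [|b t] /=; first by rewrite mulg1.
by case: eqP => [->|_] //=; rewrite leval_linv mulgA mulgV mul1g.
Qed.

Lemma weval_red w : weval g (red w) = weval g w.
Proof. by elim: w => [|a w IH] //=; rewrite weval_push IH. Qed.

Lemma weval_winv w : weval g (winv w) = (weval g w)^-1.
Proof.
elim: w => [|a w IH] /=; first by rewrite invg1.
rewrite /winv map_cons rev_cons -cats1 weval_cat -/(winv w) IH /=.
by rewrite mulg1 leval_linv invMg.
Qed.

Lemma weval_wmul u v : weval g (wmul u v) = weval g u * weval g v.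
Proof. by rewrite /wmul weval_red weval_cat. Qed.

Lemma weval_endo (f : 'I_n -> word n) w :
  weval g (endo f w) = weval (fun i => weval g (f i)) w.
Proof.
rewrite /endo weval_red; elim: w => [|a w IH] //=.
by rewrite weval_cat IH /leval; case: a.2; rewrite ?weval_winv.
Qed.

Lemma weval_mem (H : {group gT}) w : (forall i, g i \in H) -> weval g w \in H.
Proof.
move=> gH; elim: w => [|a w IH] /=; first exact: group1.
by rewrite groupM // /leval; case: a.2; rewrite ?groupV.
Qed.

End WordEvaluation.

Lemma endo_not_surjective_of_weval n (f : 'I_n -> word n)
    (gT : finGroupType) (g : 'I_n -> gT) (H : {group gT}) (j : 'I_n) :
  (forall i, weval g (f i) \in H) -> g j \notin H -> ~ endo_surjective f.
Proof.
move=> fH gjH /(_ (gen j) isT) [w [_ fw]].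
have := weval_mem w fH; rewrite -weval_endo fw /= /leval /= mulg1.
by rewrite (negPf gjH).
Qed.

Definition o0 : 'I_3 := @Ordinal 3 0 isT.
Definition o1 : 'I_3 := @Ordinal 3 1 isT.
Definition o2 : 'I_3 := @Ordinal 3 2 isT.

Lemma tperm01_conj_tperm02 :
  tperm o0 o1 ^ (tperm o0 o1 * (tperm o0 o2 * tperm o0 o1)) = tperm o0 o2.
Proof. by rewrite tpermJ !permM !permE. Qed.

Lemma tperm01_notin_cent_tperm02 : tperm o0 o1 \notin 'C[tperm o0 o2].
Proof.
apply/cent1P => /(congr1 (fun p : {perm 'I_3} => p o0)).
by rewrite !permM !permE.
Qed.

Theorem mainTheorem13 (n : nat) (hn : 2 <= n) :
  exists alpha1 : word n,
    [/\ alpha1 != [::], cyc_reduced alpha1 &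
        ~ endo_surjective (conj_x1 alpha1)].
Proof.
pose x1 : 'I_n := Ordinal (ltnW hn); pose x2 : 'I_n := Ordinal hn.
pose alpha : word n := [:: (x1, false); (x2, false); (x1, false)].
exists alpha; split => //.
pose g (i : 'I_n) : {perm 'I_3} :=
  if val i == 0%N then tperm o0 o1 else if val i == 1%N then tperm o0 o2 else 1.
apply: (@endo_not_surjective_of_weval _ _ _ g 'C[tperm o0 o2]%G x1);
  last exact: tperm01_notin_cent_tperm02.
move=> i; rewrite /conj_x1; case: ifP => i0.
  rewrite !weval_wmul weval_winv /= /leval /= /g /= i0 !mulg1 -mulgA -conjgE.
  by rewrite tperm01_conj_tperm02 cent1id.
rewrite /= /leval /= mulg1 /g i0; case: ifP => _; first exact: cent1id.
exact: group1.
Qed.
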